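(* Let $n\ge1$, $H\in\mathbb{R}^{n\times n}$ symmetric positive semidefinite, $h\in\mathbb{R}^n$, $\lambda>0$, and let $(z^k,v^k,s^k)_{k\ge0}$ be the iterates of the predictor–corrector algorithm described in the context, started from a point $(z^0,v^0,s^0)\in\mathcal{N}(1/4)$. Then at every iteration $k$, \[ \Delta\mu_p\le\frac14\mu^k,\qquad \hat\mu^k\le\Big(1-\frac{\alpha^k}{2}\Big)^2\mu^k,\qquad \Delta\mu_c\le\Big(1-\frac{\alpha^k}{2}\Big)^2\frac{1}{16n}\mu^k . \]
   Context: Box-QP: $\min_{z}\frac12 z^\top Hz+z^\top h$ s.t. $-\mathbf{1}_n\le z\le\mathbf{1}_n$, objective scaled by $2\lambda$. Variables: $z\in\mathbb{R}^n$, $v=(\gamma,\theta)\in\mathbb{R}^{2n}$, $s=(\phi,\psi)\in\mathbb{R}^{2n}$. $\mathcal{F}^+=\{(z,v,s): 2\lambda Hz+2\lambda h+\gamma-\theta=0,\ z+\phi-\mathbf{1}_n=0,\ z-\psi+\mathbf{1}_n=0,\ (\gamma,\theta,\phi,\psi)>0\}$; for $\beta\in[0,1]$, $\mathcal{N}(\beta)=\{(z,v,s)\in\mathcal{F}^+:\|v\odot s-\mu\mathbf{1}_{2n}\|\le\beta\mu\}$, $\mu=\frac{v^\top s}{2n}$. With $\Omega=[I_n,-I_n]$, the Newton system at $(z,v,s)$ with parameters $\sigma,\mu$ is $(2\lambda H)\Delta z+\Omega\Delta v=0$, $\Omega^\top\Delta z+\Delta s=0$, $s\odot\Delta v+v\odot\Delta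 s=\sigma\mu\mathbf{1}_{2n}-v\odot s$. Algorithm, iteration $k$: set $\mu^k=\frac{(v^k)^\top s^k}{2n}$; let $(\Delta z_p,\Delta v_p,\Delta s_p)$ solve the Newton system at $(z^k,v^k,s^k)$ with $\sigma=0$, $\mu=\mu^k$; $\Delta\mu_p=\frac{\Delta v_p^\top\Delta s_p}{2n}$; $\alpha^k=\min\big(\frac12,\sqrt{\mu^k/(8\|\Delta v_p\odot\Delta s_p-\Delta\mu_p\mathbf{1}_{2n}\|)}\big)$ (square-root term read as $+\infty$ if the norm is $0$); $(\hat z^k,\hat v^k,\hat s^k)=(z^k,v^k,s^k)+\alpha^k(\Delta z_p,\Delta v_p,\Delta s_p)$; $\hat\mu^k=\frac{(\hat v^k)^\top\hat s^k}{2n}$; let $(\Delta z_c,\Delta v_c,\Delta s_c)$ solve the Newton system at $(\hat z^k,\hat v^k,\hat s^k)$ with $\sigma=1$, $\mu=\hat\mu^k$; $\Delta\mu_c=\frac{\Delta v_c^\top\Delta s_c}{2n}$; $(z^{k+1},v^{k+1},s^{k+1})=(\hat z^k,\hat v^k,\hat s^k)+(\Delta z_c,\Delta v_c,\Delta s_c)$. $\odot$ is the Hadamard product, $\|\cdot\|$ the Euclidean norm. *)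

(* R is an arbitrary real closed field (needed for Num.sqrt);
   vectors of R^m are column vectors 'cV[R]_m. *)
From HB Require Import structures.
From mathcomp Require Import all_boot all_order all_algebra.
Set Implicit Arguments. Unset Strict Implicit. Unset Printing Implicit Defensive.
Import Order.TTheory GRing.Theory Num.Theory.
Local Open Scope ring_scope.

Section BoxQP.
Variable R : rcfType.

Definition had m (u w : 'cV[R]_m) : 'cV[R]_m := \col_i (u i 0 * w i 0).

Definition enorm m (u : 'cV[R]_m) : R := Num.sqrt (\sum_i (u i 0) ^+ 2).

Definition dotv m (u w : 'cV[R]_m) : R := \sum_i u i 0 * w i 0.

Definition cst m (c : R) : 'cV[R]_m := const_mx c.

Definition Omega n : 'M[R]_(n, n + n) := row_mx 1%:M (- 1%:M).

Definition mu_of n (v s : 'cV[R]_(n + n)) : R := dotv v s / (2 * n)%:R.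

Definition posv m (u : 'cV[R]_m) : Prop := forall i, 0 < u i 0.

Definition Fplus n (H : 'M[R]_n) (h : 'cV[R]_n) (lam : R)
    (z : 'cV[R]_n) (v s : 'cV[R]_(n + n)) : Prop :=
  let gam := usubmx v in let th := dsubmx v in
  let phi := usubmx s in let psi := dsubmx s in
  [/\ (2 * lam) *: (H *m z) + (2 * lam) *: h + gam - th = 0,
      z + phi - cst n 1 = 0,
      z - psi + cst n 1 = 0 &
      posv v /\ posv s].

Definition Nbhd n (H : 'M[R]_n) (h : 'cV[R]_n) (lam beta : R)
    (z : 'cV[R]_n) (v s : 'cV[R]_(n + n)) : Prop :=
  Fplus H h lam z v s /\
  enorm (had v s - cst (n + n) (mu_of v s)) <= beta * mu_of v s.

Definition newton n (H : 'M[R]_n) (lam : R)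
    (z : 'cV[R]_n) (v s : 'cV[R]_(n + n)) (sigma mu : R)
    (dz : 'cV[R]_n) (dv ds : 'cV[R]_(n + n)) : Prop :=
  [/\ (2 * lam) *: (H *m dz) + Omega n *m dv = 0,
      (Omega n)^T *m dz + ds = 0 &
      had s dv + had v ds = cst (n + n) (sigma * mu) - had v s].

(* step length alpha = min(1/2, sqrt(mu/(8 ||dv o ds - dmu 1||))),
   the square-root term being +infinity when the norm is 0 *)
Definition alpha_of n (mu : R) (dvp dsp : 'cV[R]_(n + n)) : R :=
  let nr := enorm (had dvp dsp - cst (n + n) (mu_of dvp dsp)) in
  if nr == 0 then 2^-1 else Num.min (2^-1) (Num.sqrt (mu / (8 * nr))).

End BoxQP.

From HB Require Import structures.
From mathcomp Require Import all_boot all_order all_algebra.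
From mathcomp Require Import ring lra.
Set Implicit Arguments.
Unset Strict Implicit.
Unset Printing Implicit Defensive.

Import Order.TTheory GRing.Theory Num.Theory.
Local Open Scope ring_scope.

(* The predictor direction satisfies [s dv + v ds = - v s] componentwise, so
   AM-GM gives [dv_i ds_i <= v_i s_i / 4], and [v(t) s(t) = (1 - t) v s + t^2 dv ds]
   exactly; hence [mu(t) = (1 - t) mu + t^2 dmu_p <= (1 - t/2)^2 mu], and the choice of
   the step length keeps every point of the segment in N(1/2), so positivity is never
   lost.  Positive semidefiniteness of H makes every Newton direction monotone:
   [dv^T ds = 2 lam dz^T H dz >= 0].  At a point of N(1/2) the centering direction
   satisfies [dv_i ds_i <= (mu - v_i s_i)^2 / (2 mu)], whose sum is at most [mu / 8];
   this bounds dmu_c and returns the iterate to N(1/4), so the three bounds hold at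
   every iteration by induction. *)

Section Scalars.
Variable R : realFieldType.

Lemma amgm_cross (a b c d : R) : 4 * (a * b) * (c * d) <= (b * c + a * d) ^+ 2.
Proof. have := sqr_ge0 (b * c - a * d); lra. Qed.

Lemma affine_path_gt0 (a c T : R) : 0 < a -> 0 <= T ->
  (forall t, 0 <= t <= T -> a + t * c != 0) -> 0 < a + T * c.
Proof.
move=> a_gt0 T_ge0 nz; rewrite ltNge; apply/negP => aTc_le0.
have c_lt0 : c < 0 by rewrite ltNge; apply/negP => c_ge0; nra.
have t0_ge0 : 0 <= a / - c by rewrite divr_ge0 ?oppr_ge0 ?ltW.
have t0_le : a / - c <= T by rewrite ler_pdivrMr ?oppr_gt0 //; lra.
have := nz (a / - c); rewrite t0_ge0 t0_le invrN mulrN mulNr divfK ?subrr ?eqxx.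
- by move/(_ isT).
- exact: ltr0_neq0.
Qed.

Lemma affine_pair_path_gt0 (a b c d T : R) : 0 < a -> 0 < b -> 0 <= T ->
  (forall t, 0 <= t <= T -> 0 < (a + t * c) * (b + t * d)) ->
  0 < a + T * c /\ 0 < b + T * d.
Proof.
move=> a_gt0 b_gt0 T_ge0 prod_gt0.
by split; apply: affine_path_gt0 => // t /prod_gt0;
  apply: contraTneq => ->; rewrite ?mul0r ?mulr0 ltxx.
Qed.

Lemma ler_sum_term {m} (F : 'I_m -> R) j : (forall i, 0 <= F i) -> F j <= \sum_i F i.
Proof. by move=> F_ge0; rewrite (bigD1 j) //= lerDl sumr_ge0. Qed.

Lemma sum_sqr_le_sqr_sum {m} (F : 'I_m -> R) :
  (forall i, 0 <= F i) -> \sum_i F i ^+ 2 <= (\sum_i F i) ^+ 2.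
Proof.
move=> F_ge0; rewrite [leRHS]expr2 mulr_suml; apply: ler_sum => i _.
by rewrite expr2 ler_wpM2l ?ler_sum_term.
Qed.

End Scalars.

Section Vectors.
Variables (R : rcfType) (m : nat).
Implicit Types (u w v s dv ds : 'cV[R]_m) (c t : R).

Definition avg u : R := (\sum_i u i 0) / m%:R.

Definition dev u : 'cV[R]_m := u - cst m (avg u).

(* The neighbourhood N(beta) without the linear equations of F+, which the
   estimates never use; [avg (had v s)] is [mu_of v s] (see [mu_ofE]). *)
Definition centered (beta : R) v s : Prop :=
  [/\ posv v, posv s & enorm (dev (had v s)) <= beta * avg (had v s)].

Lemma avgD u w : avg (u + w) = avg u + avg w.
Proof. by rewrite /avg -mulrDl -big_split; congr (_ / _); apply: eq_bigr => i _; rewrite mxE. Qed.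

Lemma avgZ c u : avg (c *: u) = c * avg u.
Proof. by rewrite /avg mulrA mulr_sumr; congr (_ / _); apply: eq_bigr => i _; rewrite mxE. Qed.

Lemma devD u w : dev (u + w) = dev u + dev w.
Proof. by apply/matrixP => i j; rewrite /dev avgD !mxE; ring. Qed.

Lemma devZ c u : dev (c *: u) = c *: dev u.
Proof. by apply/matrixP => i j; rewrite /dev avgZ !mxE; ring. Qed.

Lemma had_path t v s dv ds :
  had (v + t *: dv) (s + t *: ds) = had v s + t *: (had s dv + had v ds) + t ^+ 2 *: had dv ds.
Proof. by apply/matrixP => i j; rewrite !mxE; ring. Qed.

Lemma enorm_ge0 u : 0 <= enorm u.
Proof. exact: sqrtr_ge0. Qed.

Lemma enorm_sqr u : enorm u ^+ 2 = \sum_i u i 0 ^+ 2.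
Proof. by rewrite sqr_sqrtr // sumr_ge0 // => i _; rewrite sqr_ge0. Qed.

Lemma enormZ c u : enorm (c *: u) = `|c| * enorm u.
Proof.
rewrite /enorm -sqrtr_sqr -sqrtrM ?sqr_ge0 // mulr_sumr.
by congr Num.sqrt; apply: eq_bigr => i _; rewrite mxE exprMn.
Qed.

Lemma enormD_sqr_le u w : enorm (u + w) ^+ 2 <= 2 * enorm u ^+ 2 + 2 * enorm w ^+ 2.
Proof.
rewrite !enorm_sqr !mulr_sumr -big_split /=; apply: ler_sum => i _; rewrite mxE.
have := sqr_ge0 (u i 0 - w i 0); nra.
Qed.

Lemma normr_entry_le_enorm u i : `|u i 0| <= enorm u.
Proof.
rewrite -ler_sqr ?nnegrE ?enorm_ge0 // real_normK ?num_real // enorm_sqr.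
by apply: (@ler_sum_term _ _ (fun k => u k 0 ^+ 2)) => k; rewrite sqr_ge0.
Qed.

Lemma enorm_le_sum_norm u : enorm u <= \sum_i `|u i 0|.
Proof.
rewrite -ler_sqr ?nnegrE ?enorm_ge0 ?sumr_ge0 // enorm_sqr.
under eq_bigr => i _ do rewrite -real_normK ?num_real //.
exact: sum_sqr_le_sqr_sum.
Qed.

Hypothesis m_gt0 : (0 < m)%N.

Lemma avg_cst c : avg (cst m c) = c.
Proof.
rewrite /avg (eq_bigr (fun _ => c)) => [|i _]; last by rewrite mxE.
by rewrite sumr_const card_ord -[c *+ m]mulr_natr mulfK ?pnatr_eq0 -?lt0n.
Qed.

Lemma dev_cst c : dev (cst m c) = 0.
Proof. by rewrite /dev avg_cst subrr. Qed.

Lemma enorm_dev_le u : enorm (dev u) <= enorm u.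
Proof.
rewrite -ler_sqr ?nnegrE ?enorm_ge0 // !enorm_sqr; set a := avg u.
have sumE : \sum_i u i 0 = a * m%:R by rewrite /a /avg divfK ?pnatr_eq0 -?lt0n.
have -> : \sum_i dev u i 0 ^+ 2 = \sum_i (u i 0 ^+ 2 - 2 * a * u i 0 + a ^+ 2).
  by apply: eq_bigr => i _; rewrite !mxE -/a; ring.
rewrite !big_split /= sumrN -mulr_sumr sumE sumr_const card_ord -[a ^+ 2 *+ m]mulr_natr.
by have := mulr_ge0 (sqr_ge0 a) (ler0n R m); lra.
Qed.

Lemma avg_had_gt0 v s : posv v -> posv s -> 0 < avg (had v s).
Proof.
move=> v_gt0 s_gt0; rewrite /avg divr_gt0 ?ltr0n //.
have x_gt0 i : 0 < had v s i 0 by rewrite mxE mulr_gt0.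
apply: lt_le_trans (x_gt0 (Ordinal m_gt0)) _.
by apply: (@ler_sum_term _ _ (fun i => had v s i 0)) => i; rewrite ltW.
Qed.

Lemma entry_ge_of_dev beta u i :
  enorm (dev u) <= beta * avg u -> (1 - beta) * avg u <= u i 0.
Proof.
move=> dev_le; have := le_trans (normr_entry_le_enorm (dev u) i) dev_le.
rewrite /dev !mxE ler_norml; lra.
Qed.

End Vectors.

Section Predictor.
Variables (R : rcfType) (m : nat).
Hypothesis m_gt0 : (0 < m)%N.
Variables v s dv ds : 'cV[R]_m.
Hypothesis vs_centered : centered 4^-1 v s.
Hypothesis affine_dir : had s dv + had v ds = - had v s.
Hypothesis dir_mono : 0 <= avg (had dv ds).
Implicit Types a t : R.

Local Notation mu := (avg (had v s)).
Local Notation x t := (had (v + t *: dv) (s + t *: ds)).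

Let mu_gt0 : 0 < mu.
Proof. by case: vs_centered => v_gt0 s_gt0 _; exact: avg_had_gt0. Qed.

Lemma predictor_avg_le : avg (had dv ds) <= mu / 4.
Proof.
rewrite /avg mulrAC ler_wpM2r ?invr_ge0 ?ler0n // mulr_suml; apply: ler_sum => i _.
have [v_gt0 s_gt0 _] := vs_centered.
have := amgm_cross (v i 0) (s i 0) (dv i 0) (ds i 0).
have := congr1 (fun w : 'cV[R]_m => w i 0) affine_dir; rewrite !mxE => ->.
have := mulr_gt0 (v_gt0 i) (s_gt0 i); nra.
Qed.

Lemma predictor_had t : x t = (1 - t) *: had v s + t ^+ 2 *: had dv ds.
Proof. by apply/matrixP => i j; rewrite had_path affine_dir !mxE; ring. Qed.

Lemma predictor_avg t : avg (x t) = (1 - t) * mu + t ^+ 2 * avg (had dv ds).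
Proof. by rewrite predictor_had avgD !avgZ. Qed.

Lemma predictor_avg_ge t : (1 - t) * mu <= avg (x t).
Proof. by rewrite predictor_avg lerDl mulr_ge0 ?sqr_ge0. Qed.

Lemma predictor_avg_le_sqr t : avg (x t) <= (1 - t / 2) ^+ 2 * mu.
Proof.
have -> : (1 - t / 2) ^+ 2 * mu = (1 - t) * mu + t ^+ 2 * (mu / 4) by field.
by rewrite predictor_avg lerD2l ler_wpM2l ?sqr_ge0 ?predictor_avg_le.
Qed.

Lemma predictor_spread t : 0 <= t <= 2^-1 ->
  t ^+ 2 * enorm (dev (had dv ds)) <= mu / 8 ->
  enorm (dev (x t)) <= 2^-1 * avg (x t).
Proof.
move=> /andP[t_ge0 t_le] tnr.
have avg_ge := predictor_avg_ge t; set a := avg (x t) in avg_ge *.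
rewrite -ler_sqr ?nnegrE ?enorm_ge0 //; last by have := mu_gt0; nra.
rewrite predictor_had devD !devZ; apply: le_trans (enormD_sqr_le _ _) _.
rewrite !enormZ !ger0_norm ?sqr_ge0 //; last lra.
have [_ _ x_dev_le] := vs_centered.
have := enorm_ge0 (dev (had v s)); have := enorm_ge0 (dev (had dv ds)).
move: x_dev_le tnr; set ex := enorm _; set ep := enorm _ => x_dev_le tnr ep_ge0 ex_ge0.
have sqx : ((1 - t) * ex) ^+ 2 <= ((1 - t) * mu / 4) ^+ 2.
  by apply: lerXn2r; rewrite ?nnegrE; nra.
have sqp : (t ^+ 2 * ep) ^+ 2 <= (mu / 8) ^+ 2.
  by apply: lerXn2r; rewrite ?nnegrE //; nra.
have sqa : ((1 - t) * mu) ^+ 2 <= a ^+ 2.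
  by apply: lerXn2r; rewrite ?nnegrE; nra.
have sqmu : mu ^+ 2 <= 4 * ((1 - t) * mu) ^+ 2.
  have -> : 4 * ((1 - t) * mu) ^+ 2 = (2 * (1 - t) * mu) ^+ 2 by ring.
  by apply: lerXn2r; rewrite ?nnegrE; nra.
lra.
Qed.

Lemma predictor_centered a : 0 <= a <= 2^-1 ->
  a ^+ 2 * enorm (dev (had dv ds)) <= mu / 8 ->
  centered 2^-1 (v + a *: dv) (s + a *: ds).
Proof.
move=> a_range anr; have [v_gt0 s_gt0 _] := vs_centered.
have /andP[a_ge0 a_le] := a_range.
have x_gt0 i t : 0 <= t <= a -> 0 < (v i 0 + t * dv i 0) * (s i 0 + t * ds i 0).
  case/andP=> t_ge0 t_le.
  have t_range : 0 <= t <= 2^-1 by rewrite t_ge0 /=; lra.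
  have tnr : t ^+ 2 * enorm (dev (had dv ds)) <= mu / 8.
    apply: le_trans anr; rewrite ler_wpM2r ?enorm_ge0 //.
    by apply: lerXn2r; rewrite ?nnegrE.
  have := entry_ge_of_dev i (predictor_spread t_range tnr).
  have := predictor_avg_ge t; rewrite !mxE.
  have : 0 < (1 - t) * mu by rewrite mulr_gt0 //; lra.
  lra.
have vs_gt0 i := affine_pair_path_gt0 (v_gt0 i) (s_gt0 i) a_ge0 (x_gt0 i).
split=> [i | i |]; rewrite ?mxE; [exact: (vs_gt0 i).1 | exact: (vs_gt0 i).2 |].
exact: predictor_spread.
Qed.

End Predictor.

Section Corrector.
Variables (R : rcfType) (m : nat).
Hypothesis m_gt0 : (0 < m)%N.
Variables v s dv ds : 'cV[R]_m.
Hypothesis vs_centered : centered 2^-1 v s.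
Hypothesis centering_dir : had s dv + had v ds = cst m (avg (had v s)) - had v s.
Hypothesis dir_mono : 0 <= avg (had dv ds).

Local Notation mu := (avg (had v s)).

Let mu_gt0 : 0 < mu.
Proof. by case: vs_centered => v_gt0 s_gt0 _; exact: avg_had_gt0. Qed.

Let x_ge i : mu / 2 <= v i 0 * s i 0.
Proof.
case: vs_centered => _ _ /(entry_ge_of_dev i); rewrite mxE; lra.
Qed.

Let dir_sum_ge0 : 0 <= \sum_i dv i 0 * ds i 0.
Proof.
move: dir_mono; rewrite /avg pmulr_lge0 ?invr_gt0 ?ltr0n //.
by under eq_bigr => i _ do rewrite mxE.
Qed.

Lemma corrector_entry_le i : dv i 0 * ds i 0 <= (mu - v i 0 * s i 0) ^+ 2 / (2 * mu).
Proof.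
have mu_pos := mu_gt0; have := amgm_cross (v i 0) (s i 0) (dv i 0) (ds i 0).
have := congr1 (fun w : 'cV[R]_m => w i 0) centering_dir; rewrite !mxE => ->.
rewrite ler_pdivlMr; last lra.
move: (x_ge i); set x := v i 0 * s i 0; set p := dv i 0 * ds i 0 => x_ge_mu amgm.
case: (lerP 0 p) => p_sign.
- have : 0 <= (x - mu / 2) * p by rewrite mulr_ge0 // subr_ge0.
  lra.
- have : p * mu <= 0 by rewrite mulr_le0_ge0 ?ltW.
  have := sqr_ge0 (mu - x); lra.
Qed.

Let gap_sum_le : \sum_i (mu - v i 0 * s i 0) ^+ 2 / (2 * mu) <= mu / 8.
Proof.
have mu_pos := mu_gt0; have [_ _ dev_le] := vs_centered.
have -> : \sum_i (mu - v i 0 * s i 0) ^+ 2 / (2 * mu) = enorm (dev (had v s)) ^+ 2 / (2 * mu).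
  by rewrite enorm_sqr mulr_suml; apply: eq_bigr => i _; rewrite !mxE -sqrrN opprB.
rewrite ler_pdivrMr; last lra.
have -> : mu / 8 * (2 * mu) = (2^-1 * mu) ^+ 2 by field.
by apply: lerXn2r; rewrite ?nnegrE ?enorm_ge0 //; lra.
Qed.

Lemma corrector_avg_le : avg (had dv ds) <= mu / 8 / m%:R.
Proof.
rewrite /avg ler_wpM2r ?invr_ge0 ?ler0n //.
under eq_bigr => i _ do rewrite mxE.
exact: le_trans (ler_sum _ (fun i _ => corrector_entry_le i)) gap_sum_le.
Qed.

Lemma corrector_sum_norm_le : \sum_i `|dv i 0 * ds i 0| <= mu / 4.
Proof.
(* With g_i := (mu - v_i s_i)^2 / (2 mu) >= dv_i ds_i, we have |dv_i ds_i| <= 2 g_i - dv_i ds_i,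
   and the dv_i ds_i have a nonnegative sum. *)
have norm_le i : `|dv i 0 * ds i 0| <=
    2 * ((mu - v i 0 * s i 0) ^+ 2 / (2 * mu)) - dv i 0 * ds i 0.
  have := corrector_entry_le i; have mu_pos := mu_gt0.
  have : 0 <= (mu - v i 0 * s i 0) ^+ 2 / (2 * mu) by rewrite divr_ge0 ?sqr_ge0 //; lra.
  by case: (lerP 0 (dv i 0 * ds i 0)) => p_sign; [rewrite ger0_norm | rewrite ltr0_norm]; lra.
apply: le_trans (ler_sum _ (fun i _ => norm_le i)) _.
by rewrite sumrB -mulr_sumr; have := gap_sum_le; have := dir_sum_ge0; lra.
Qed.

Lemma corrector_had : had (v + dv) (s + ds) = cst m mu + had dv ds.
Proof.
apply/matrixP => i j; have := congr1 (fun w : 'cV[R]_m => w i j) centering_dir.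
rewrite !mxE; lra.
Qed.

Lemma corrector_centered : centered 4^-1 (v + dv) (s + ds).
Proof.
have mu_pos := mu_gt0; have [v_gt0 s_gt0 _] := vs_centered.
have p_ge i : - (mu / 4) <= dv i 0 * ds i 0.
  have := @ler_sum_term _ _ (fun j => `|dv j 0 * ds j 0|) i (fun j => normr_ge0 _).
  by move/le_trans/(_ corrector_sum_norm_le); rewrite ler_norml => /andP[].
have x_gt0 i t : 0 <= t <= 1 -> 0 < (v i 0 + t * dv i 0) * (s i 0 + t * ds i 0).
  case/andP=> t_ge0 t_le1.
  have := congr1 (fun w : 'cV[R]_m => w i 0) (had_path t v s dv ds).
  rewrite centering_dir !mxE => ->.
  move: (x_ge i) (p_ge i); set x := v i 0 * s i 0; set p := dv i 0 * ds i 0 => x_ge_mu p_ge_mu.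
  (* (1 - t) x + t mu + t^2 p >= mu / 2 + t mu / 4 *)
  have : 0 <= (1 - t) * (x - mu / 2) by rewrite mulr_ge0 // subr_ge0.
  have : 0 <= t ^+ 2 * (p + mu / 4) by rewrite mulr_ge0 ?sqr_ge0 //; lra.
  have : 0 <= t * (1 - t) * mu by apply: mulr_ge0 (ltW mu_pos); apply: mulr_ge0; lra.
  have := mulr_ge0 t_ge0 (ltW mu_pos).
  lra.
have vs_gt0 i := affine_pair_path_gt0 (v_gt0 i) (s_gt0 i) ler01 (x_gt0 i).
split=> [i | i |]; rewrite ?mxE.
- by have [+ _] := vs_gt0 i; rewrite mul1r.
- by have [_ +] := vs_gt0 i; rewrite mul1r.
rewrite corrector_had devD dev_cst // add0r avgD avg_cst //.
apply: le_trans (enorm_dev_le m_gt0 _) _; apply: le_trans (enorm_le_sum_norm _) _.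
under eq_bigr => i _ do rewrite mxE.
apply: le_trans corrector_sum_norm_le _.
by rewrite mulrDr mulrC lerDl mulr_ge0 ?invr_ge0.
Qed.

End Corrector.

Lemma mu_ofE (R : rcfType) n (v s : 'cV[R]_(n + n)) : mu_of v s = avg (had v s).
Proof.
rewrite /mu_of /avg /dotv mul2n -addnn.
by congr (_ / _); apply: eq_bigr => i _; rewrite mxE.
Qed.

Lemma Nbhd_centered (R : rcfType) n (H : 'M[R]_n) h lam beta z v s :
  Nbhd H h lam beta z v s -> centered beta v s.
Proof. by case=> -[_ _ _ [v_gt0 s_gt0]]; rewrite !mu_ofE. Qed.

Lemma alpha_of_spec (R : rcfType) n (mu : R) (dv ds : 'cV[R]_(n + n)) : 0 <= mu ->
  0 <= alpha_of mu dv ds <= 2^-1 /\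
  alpha_of mu dv ds ^+ 2 * enorm (dev (had dv ds)) <= mu / 8.
Proof.
move=> mu_ge0; rewrite /alpha_of mu_ofE -/(dev _); set e := enorm _.
have e_ge0 : 0 <= e := enorm_ge0 _.
case: ifPn => [/eqP -> | e_neq0]; first by rewrite mulr0; split; lra.
have e_gt0 : 0 < e by rewrite lt0r e_neq0.
set r := Num.sqrt _; have r_ge0 : 0 <= r := sqrtr_ge0 _.
have r_sqr : r ^+ 2 = mu / (8 * e) by rewrite sqr_sqrtr // divr_ge0 // mulr_ge0.
have min_ge0 : 0 <= Num.min 2^-1 r by rewrite le_min r_ge0 andbT; lra.
split; first by rewrite min_ge0 ge_min lexx.
have -> : mu / 8 = r ^+ 2 * e by rewrite r_sqr; field; rewrite gt_eqF.
rewrite ler_wpM2r //; apply: lerXn2r; rewrite ?nnegrE //.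
by rewrite ge_min lexx orbT.
Qed.

Section Newton.
Variables (R : rcfType) (n : nat) (H : 'M[R]_n) (lam : R).
Hypothesis H_psd : forall x : 'cV[R]_n, 0 <= (x^T *m H *m x) 0 0.
Hypothesis lam_ge0 : 0 <= lam.

Lemma newton_dotv_ge0 z v s sigma mu dz (dv ds : 'cV[R]_(n + n)) :
  newton H lam z v s sigma mu dz dv ds -> 0 <= dotv dv ds.
Proof.
case=> /addr0_eq Omega_dv /addr0_eq ds_E _.
have -> : dotv dv ds = (dv^T *m ds) 0 0.
  by rewrite !mxE; apply: eq_bigr => i _; rewrite mxE.
rewrite -ds_E mulmxN mulmxA -trmx_mul -Omega_dv linearN /= mulNmx opprK linearZ /=.
rewrite -scalemxAl mxE mulr_ge0 ?mulr_ge0 //.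
have -> : (H *m dz)^T *m dz = (dz^T *m H *m dz)^T by rewrite -mulmxA !trmx_mul trmxK.
rewrite mxE; exact: H_psd.
Qed.

Lemma newton_avg_ge0 z v s sigma mu dz (dv ds : 'cV[R]_(n + n)) :
  newton H lam z v s sigma mu dz dv ds -> 0 <= avg (had dv ds).
Proof. by move/newton_dotv_ge0; rewrite -mu_ofE /mu_of => ?; rewrite divr_ge0. Qed.

Hypothesis n_gt0 : (0 < n)%N.

Lemma predictor_corrector_step {zp zc dzp dzc} {v s dvp dsp dvc dsc : 'cV[R]_(n + n)} :
  centered 4^-1 v s ->
  let mu := mu_of v s in let a := alpha_of mu dvp dsp in
  let vh := v + a *: dvp in let sh := s + a *: dsp in
  newton H lam zp v s 0 mu dzp dvp dsp ->
  newton H lam zc vh sh 1 (mu_of vh sh) dzc dvc dsc ->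
  [/\ mu_of dvp dsp <= 4^-1 * mu, mu_of vh sh <= (1 - a / 2) ^+ 2 * mu,
      mu_of dvc dsc <= (1 - a / 2) ^+ 2 * (16 * n%:R)^-1 * mu &
      centered 4^-1 (vh + dvc) (sh + dsc)].
Proof.
move=> vs_c mu a vh sh pred corr.
have nn_gt0 : (0 < n + n)%N by rewrite addn_gt0 n_gt0.
have muE : mu = avg (had v s) := mu_ofE v s.
have mu_gt0 : 0 < mu by rewrite muE; case: vs_c => v_gt0 s_gt0 _; exact: avg_had_gt0.
have [a_range anr] := alpha_of_spec dvp dsp (ltW mu_gt0); rewrite -/a muE in a_range anr.
have pmono := newton_avg_ge0 pred; have cmono := newton_avg_ge0 corr.
have [_ _] := pred; rewrite mul0r => pdir.
have {}pdir : had s dvp + had v dsp = - had v s.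
  by rewrite pdir; apply/matrixP => i j; rewrite !mxE sub0r.
have [_ _] := corr; rewrite mul1r mu_ofE => cdir.
have hat_c := predictor_centered nn_gt0 vs_c pdir pmono a_range anr.
rewrite !mu_ofE muE; split.
- by rewrite mulrC (predictor_avg_le vs_c pdir).
- exact: (predictor_avg_le_sqr vs_c pdir).
- apply: le_trans (corrector_avg_le nn_gt0 hat_c cdir) _.
  have := predictor_avg_le_sqr vs_c pdir a; rewrite -/vh -/sh natrD => muh_le.
  have N_gt0 : 0 < (n%:R : R) by rewrite ltr0n.
  have -> : (1 - a / 2) ^+ 2 / (16 * n%:R) * avg (had v s) =
      (1 - a / 2) ^+ 2 * avg (had v s) / 8 / (n%:R + n%:R).
    by field; rewrite !gt_eqF ?addr_gt0.
  apply: ler_wpM2r; first by rewrite invr_ge0 addr_ge0 ?ler0n.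
  by apply: ler_wpM2r; rewrite ?invr_ge0.
- by have := corrector_centered nn_gt0 hat_c cdir cmono.
Qed.

End Newton.

Theorem lemma4 (R : rcfType) (n : nat) (hn : (0 < n)%N)
  (H : 'M[R]_n) (h : 'cV[R]_n) (lam : R)
  (z : nat -> 'cV[R]_n) (v s : nat -> 'cV[R]_(n + n))
  (dzp : nat -> 'cV[R]_n) (dvp dsp : nat -> 'cV[R]_(n + n))
  (dzc : nat -> 'cV[R]_n) (dvc dsc : nat -> 'cV[R]_(n + n)) :
  H^T = H ->
  (forall x : 'cV[R]_n, 0 <= (x^T *m H *m x) 0 0) ->
  0 < lam ->
  Nbhd H h lam (4^-1) (z 0%N) (v 0%N) (s 0%N) ->
  (forall k : nat,
     let muk := mu_of (v k) (s k) in
     let ak := alpha_of muk (dvp k) (dsp k) in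
     let zh := z k + ak *: dzp k in
     let vh := v k + ak *: dvp k in
     let sh := s k + ak *: dsp k in
     [/\ newton H lam (z k) (v k) (s k) 0 muk (dzp k) (dvp k) (dsp k),
         newton H lam zh vh sh 1 (mu_of vh sh) (dzc k) (dvc k) (dsc k),
         z k.+1 = zh + dzc k,
         v k.+1 = vh + dvc k &
         s k.+1 = sh + dsc k]) ->
  forall k : nat,
    let muk := mu_of (v k) (s k) in
    let ak := alpha_of muk (dvp k) (dsp k) in
    let vh := v k + ak *: dvp k in
    let sh := s k + ak *: dsp k in
    [/\ mu_of (dvp k) (dsp k) <= 4^-1 * muk,
        mu_of vh sh <= (1 - ak / 2) ^+ 2 * muk &
        mu_of (dvc k) (dsc k) <= (1 - ak / 2) ^+ 2 * (16 * n%:R)^-1 * muk].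
Proof.
move=> _ H_psd lam_gt0 N0 iter.
have centered_k k : centered 4^-1 (v k) (s k).
  elim: k => [|k IH]; first exact: Nbhd_centered N0.
  have [pred corr _ -> ->] := iter k.
  by have [_ _ _] := predictor_corrector_step H_psd (ltW lam_gt0) hn IH pred corr.
move=> k; have [pred corr _ _ _] := iter k.
by have [] := predictor_corrector_step H_psd (ltW lam_gt0) hn (centered_k k) pred corr.
Qed.
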